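(* Let $G=(V,E)$ be a finite simple graph with nonempty vertex set and burning number $b(G)$. Consider the following procedure (the burning greedy permutation algorithm, BGP), which receives only $G$ as input. Choose $s_1\in V$ arbitrarily and set $k=1$. While $\bigcup_{i=1}^{k}N_{k-i}[s_i]\neq V$, let $s_{k+1}$ be any vertex $u\in V$ maximizing $d(u,\{s_1,\dots,s_k\})$ (ties broken arbitrarily) and increase $k$ by one. Return $(s_1,\dots,s_k)$. Then, for every choice made by this procedure, it terminates and returns a burning sequence of $G$ of length at most $3b(G)-2$; that is, BGP is a $(3-2/b(G))$-approximation algorithm for the graph burning problem.
   Context: For vertices $u,v$ of $G$, $d(u,v)$ is the number of edges on a shortest $u$–$v$ path ($+\infty$ if none exists), and for $S\subseteq V$, $d(u,S)=\min_{w\in S}d(u,w)$. For $v\in V$ and an integer $r\ge 0$, $N_r[v]=\{u\in V: d(u,v)\le r\}$ is the closed $r$-th neighborhood of $v$ (so $N_0[v]=\{v\}$). A burning sequence of length $k$ is a sequence $(s_1,\dots,s_k)$ of vertices of $G$ (repetitions allowed) such that $\bigcup_{i=1}^{k}N_{k-i}[s_i]=V$; equivalently, if in round $i$ vertex $s_i$ becomes burned and every neighbor of a vertex burned in an earlier round becomes burned, then all vertices are burned after round $k$. The burning number $b(G)$ is the minimum length of a burning sequence of $G$. *)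

From mathcomp Require Import all_boot.
Set Implicit Arguments. Unset Strict Implicit. Unset Printing Implicit Defensive.

Section Burning.
Variables (T : finType) (e : rel T).

Definition walkn (u v : T) (n : nat) : bool :=
  [exists t : n.-tuple T, path e u t && (last u t == v)].

Lemma connect_walkn u v : connect e u v -> exists n, walkn u v n.
Proof.
move=> /connectP [p pp lp]; exists (size p); apply/existsP.
exists (in_tuple p); by rewrite /= pp -lp eqxx.
Qed.

(* d(u,v): None stands for +infinity (no path). In a simple graph the least
   number of edges of a u-v walk is the length of a shortest u-v path. *)
Definition dist (u v : T) : option nat :=
  match @idP (connect e u v) with
  | ReflectT H => Some (ex_minn (connect_walkn H))
  | ReflectF _ => None
  end.

Definition ole (a b : option nat) : bool :=
  match a, b with
  | _, None => true
  | None, Some _ => false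
  | Some x, Some y => x <= y
  end.

Definition omin (a b : option nat) : option nat := if ole a b then a else b.

Definition setdist (u : T) (S : seq T) : option nat :=
  foldr omin None [seq dist u w | w <- S].

Definition ball (v : T) (r : nat) : {set T} := [set u | ole (dist u v) (Some r)].

(* cover [:: s_1; ...; s_k] = \bigcup_{i=1}^k N_{k-i}[s_i] *)
Fixpoint cover (q : seq T) : {set T} :=
  if q is x :: q' then ball x (size q') :|: cover q' else set0.

Definition burning_seq (q : seq T) : Prop := cover q = [set: T].

Definition is_burning_number (b : nat) : Prop :=
  (exists q, size q = b /\ burning_seq q) /\
  (forall q, burning_seq q -> b <= size q).

End Burning.

From Pilot Require Import Defs.
From mathcomp Require Import all_boot zify.
Set Implicit Arguments. Unset Strict Implicit. Unset Printing Implicit Defensive.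

(* Let q be an optimal burning sequence, of length b.  As long as the prefixes
   of length at most b do not cover V, greedy choice forces the b + 1 vertices
   s_1, ..., s_(b+1) to be pairwise at distance at least
   D = d(s_(b+1), {s_1, ..., s_b}).  By pigeonhole two of them lie in the same
   ball N_(b-i)[q_i], so D <= 2b - 2, i.e. every vertex is within 2b - 2 of
   {s_1, ..., s_b}.  After 3b - 2 rounds each s_i with i <= b has radius at
   least 2b - 2, so the prefix of length 3b - 2 covers V. *)

Lemma ole_refl a : ole a a.
Proof. by case: a => /=. Qed.

Lemma ole_trans a b c : ole a b -> ole b c -> ole a c.
Proof. by case: a; case: b; case: c => //= x y z; apply: leq_trans. Qed.

Lemma omin_lel a b : ole (omin a b) a.
Proof.
rewrite /omin; case: ifP => [_|]; first exact: ole_refl.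
by case: a; case: b => //= x y /negbT; rewrite -ltnNge => /ltnW.
Qed.

Lemma omin_ler a b : ole (omin a b) b.
Proof. by rewrite /omin; case: ifP => // _; apply: ole_refl. Qed.

Lemma mkseq_f (T : eqType) (s : nat -> T) n i : i < n -> s i \in mkseq s n.
Proof. by move=> lt_in; apply: map_f; rewrite mem_iota. Qed.

Lemma mkseq_subset (T : eqType) (s : nat -> T) m n :
  m <= n -> {subset mkseq s m <= mkseq s n}.
Proof.
move=> le_mn x /mapP [i]; rewrite mem_iota => /andP [_ lt_im] ->.
by apply: mkseq_f; lia.
Qed.

Lemma ex_minn_pos (P : pred nat) K : 0 < K -> P K ->
  exists k, [/\ 0 < k, k <= K, P k & forall j, 0 < j -> j < k -> ~~ P j].
Proof.
move=> K_gt0 PK; have exP : exists k, (0 < k) && P k by exists K; rewrite K_gt0.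
case: (ex_minnP exP) => k /andP [k_gt0 Pk] k_min; exists k; split=> //.
  by apply: k_min; rewrite K_gt0.
move=> j j_gt0 lt_jk; apply: contraTN lt_jk => Pj.
by rewrite -leqNgt k_min // j_gt0.
Qed.

Section Distances.
Variables (T : finType) (e : rel T).

Lemma walkn_cat u x v m n : walkn e u x m -> walkn e x v n -> walkn e u v (m + n).
Proof.
move=> /existsP [t1 /andP [p1 /eqP l1]] /existsP [t2 /andP [p2 /eqP l2]].
apply/existsP; exists [tuple of t1 ++ t2].
by rewrite /= cat_path last_cat l1 p1 p2 l2 eqxx.
Qed.

Lemma walkn_connect u v n : walkn e u v n -> connect e u v.
Proof. by move=> /existsP [t /andP [p /eqP l]]; apply/connectP; exists t. Qed.

Lemma dist_leP u v n :
  ole (dist e u v) (Some n) <-> exists2 m, m <= n & walkn e u v m.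
Proof.
rewrite /dist; destruct (@idP (connect e u v)) as [conn|nconn] => /=.
  split; first by case: ex_minnP => m walk_m _ le_mn; exists m.
  move=> [m le_mn walk_m]; case: ex_minnP => m' _ /(_ m walk_m).
  by move/leq_trans; apply.
by split=> // [[m _ /walkn_connect]].
Qed.

Lemma setdist_le_dist u S w : w \in S -> ole (setdist e u S) (dist e u w).
Proof.
elim: S => //= y S IH; rewrite in_cons => /predU1P [->|/IH].
  exact: omin_lel.
exact: ole_trans (omin_ler _ _).
Qed.

Lemma setdist_attained u S :
  setdist e u S = None \/ exists2 w, w \in S & setdist e u S = dist e u w.
Proof.
elim: S => [|y S IH] /=; first by left.
rewrite /setdist /= -/(setdist e u S) /omin; case: ifP => _.
  by right; exists y; rewrite ?mem_head.
case: IH => [->|[w wS ->]]; first by left.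
by right; exists w; rewrite // in_cons wS orbT.
Qed.

Lemma setdist_subset u S S' : {subset S <= S'} ->
  ole (setdist e u S') (setdist e u S).
Proof.
move=> sub; case: (setdist_attained u S) => [->|[w wS ->]].
  by case: (setdist _ _ _).
exact/setdist_le_dist/sub.
Qed.

Lemma coverP (q : seq T) x0 u : reflect
  (exists2 i, i < size q & u \in ball e (nth x0 q i) (size q - i.+1))
  (u \in Defs.cover e q).
Proof.
elim: q => [|y q IH] /=; first by rewrite inE; constructor => -[].
rewrite inE; apply: (iffP orP) => [[u_y|/IH [i lt_iq u_i]]|[[|i] lt_iq u_i]].
- by exists 0; rewrite // subn1.
- by exists i.+1.
- by left; rewrite subn1 in u_i.
- by right; apply/IH; exists i.
Qed.

Lemma burning_seq_size_gt0 (x : T) q : burning_seq e q -> 0 < size q.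
Proof. by case: q => //= /setP /(_ x); rewrite !inE. Qed.

Hypothesis e_sym : symmetric e.

Lemma walkn_sym u v n : walkn e u v n -> walkn e v u n.
Proof.
move=> /existsP [t /andP [p /eqP l]].
have sz : size (rev (belast u t)) == n by rewrite size_rev size_belast size_tuple.
apply/existsP; exists (Tuple sz) => /=; apply/andP; split.
  by rewrite -l rev_path (@eq_path _ _ e) // => a b; rewrite e_sym.
by rewrite -l -(last_cons (last u t)) -rev_rcons -lastI rev_cons last_rcons.
Qed.

Lemma dist_le_add x u v r1 r2 :
  ole (dist e u x) (Some r1) -> ole (dist e v x) (Some r2) ->
  ole (dist e u v) (Some (r1 + r2)).
Proof.
move=> /dist_leP [m1 le1 walk1] /dist_leP [m2 le2 walk2]; apply/dist_leP.
by exists (m1 + m2); [apply: leq_add | apply: walkn_cat walk1 (walkn_sym walk2)].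
Qed.

(* Pigeonhole: f 0, ..., f (size q) are more points than q has balls. *)
Lemma burning_seq_close_pair (q : seq T) (f : nat -> T) : burning_seq e q ->
  exists p r, p < r <= size q /\ ole (dist e (f r) (f p)) (Some (2 * size q - 2)).
Proof.
move=> burn_q; set b := size q.
have in_some_ball (p : 'I_b.+1) :
    exists i : 'I_b, f p \in ball e (nth (f 0) q i) (b - i.+1).
  have /(coverP _ (f 0)) [i lt_ib f_i] : f p \in Defs.cover e q.
    by rewrite burn_q inE.
  by exists (Ordinal lt_ib).
have [g f_g] := fin_all_exists in_some_ball.
have /injectivePn [p1 [p2 ne_p12 g_p12]] : ~~ injectiveb g.
  by apply/injectiveP => /leq_card; rewrite !card_ord ltnn.
have close (p r : 'I_b.+1) : p < r -> g p = g r ->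
    exists p r, p < r <= b /\ ole (dist e (f r) (f p)) (Some (2 * b - 2)).
  move=> lt_pr g_pr; exists p, r; split; first by rewrite lt_pr -ltnS ltn_ord.
  have := f_g p; have := f_g r; rewrite g_pr !inE => /dist_le_add d_r /d_r.
  by move/ole_trans; apply; rewrite /=; lia.
by move: ne_p12; rewrite -(inj_eq val_inj) neq_ltn => /orP [/close|/close]; apply.
Qed.

End Distances.

Section Greedy.
Variables (T : finType) (e : rel T) (s : nat -> T).
Hypothesis greedy : forall k, 0 < k -> ~ burning_seq e (mkseq s k) ->
  forall u : T, ole (setdist e u (mkseq s k)) (setdist e (s k) (mkseq s k)).

Lemma greedy_setdist_le_dist p r n : p < r <= n -> ~ burning_seq e (mkseq s r) ->
  ole (setdist e (s n) (mkseq s n)) (dist e (s r) (s p)).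
Proof.
move=> /andP [lt_pr le_rn] no_burn_r.
apply: ole_trans (setdist_subset e _ (mkseq_subset le_rn)) _.
apply: ole_trans (greedy _ no_burn_r (s n)) _; first lia.
exact/setdist_le_dist/mkseq_f.
Qed.

Lemma burning_seq_mkseq n r m :
  (forall u, ole (setdist e u (mkseq s n)) (Some r)) -> n + r <= m ->
  burning_seq e (mkseq s m).
Proof.
move=> near_n le_m; apply/setP => u; rewrite inE.
have := near_n u.
case: (setdist_attained e u (mkseq s n)) => [->//|[w /mapP [i]]].
rewrite mem_iota => /andP [_ lt_in] -> -> d_ui.
apply/(coverP _ _ (s 0)); exists i; rewrite size_mkseq; first lia.
rewrite nth_mkseq ?inE; last lia.
by apply: ole_trans d_ui _; rewrite /=; lia.
Qed.

Hypothesis e_sym : symmetric e.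

Lemma greedy_burning_seq_within q : burning_seq e q ->
  exists k, [/\ 0 < k, k <= 3 * size q - 2 & burning_seq e (mkseq s k)].
Proof.
move=> burn_q; set b := size q.
have b_gt0 : 0 < b := burning_seq_size_gt0 (s 0) burn_q.
have [/hasP [j]|/hasPn no_burn] :=
  boolP (has (fun j => Defs.cover e (mkseq s j) == setT) (iota 1 b)).
  rewrite mem_iota => /andP [j_gt0 le_jb] /eqP burn_j.
  by exists j; split=> //; lia.
have {}no_burn j : 0 < j -> j <= b -> ~ burning_seq e (mkseq s j).
  by move=> j_gt0 le_jb /eqP; apply/negP/no_burn; rewrite mem_iota; lia.
have [p [r [/andP [lt_pr le_rb] d_rp]]] := burning_seq_close_pair e_sym s burn_q.
have gap_b : ole (setdist e (s b) (mkseq s b)) (Some (2 * b - 2)).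
  apply: ole_trans d_rp; apply: greedy_setdist_le_dist; first by rewrite lt_pr.
  by apply: no_burn; lia.
exists (3 * b - 2); split; [lia | by [] |].
apply: (@burning_seq_mkseq b (2 * b - 2)); last lia.
by move=> u; apply: ole_trans gap_b; apply: greedy => //; apply: no_burn.
Qed.

End Greedy.

Theorem theorem2 (T : finType) (e : rel T) (e_sym : symmetric e)
    (e_irr : irreflexive e) (b : nat) (hb : is_burning_number e b)
    (s : nat -> T)
    (greedy : forall k, 0 < k -> ~ burning_seq e (mkseq s k) ->
       forall u : T, ole (setdist e u (mkseq s k)) (setdist e (s k) (mkseq s k))) :
  exists k, [/\ 0 < k, k <= 3 * b - 2, burning_seq e (mkseq s k) &
    forall j, 0 < j -> j < k -> ~ burning_seq e (mkseq s j)].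
Proof.
have [[q [<- burn_q]] _] := hb.
have [K [K_gt0 le_K burn_K]] := greedy_burning_seq_within greedy e_sym burn_q.
have [k [k_gt0 le_kK /eqP burn_k first_k]] :=
  ex_minn_pos (P := fun k => Defs.cover e (mkseq s k) == setT) K_gt0
    (introT eqP burn_K).
exists k; split=> //; first exact: leq_trans le_K.
by move=> j j_gt0 lt_jk /eqP; apply/negP/first_k.
Qed.
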